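(* Let $-\infty<t_1<t_2<+\infty$, $b>1$, and let $z\in\mathbb{C}$ with $\operatorname{Im}z>0$ satisfy $\bigl|z-\frac{t_1+t_2}2\bigr|\ge b\,\frac{t_2-t_1}2$. Then $$\omega(z,[t_1,t_2])\ge\frac{b-1}{2\pi b}\,\frac{(t_2-t_1)\operatorname{Im}z}{|z|^2-\operatorname{Re}z\,(t_1+t_2)+t_1t_2}\ge\frac{b-1}{2\pi b}\,\frac{(t_2-t_1)\operatorname{Im}z}{(|z|+|t_1|)(|z|+|t_2|)}.$$
   Context: For $z$ with $\operatorname{Im}z>0$ and Borel $B\subset\mathbb{R}$, $\omega(z,B)=\frac1\pi\int_B\frac{\operatorname{Im}z}{(t-\operatorname{Re}z)^2+(\operatorname{Im}z)^2}dt$ is the harmonic measure of the upper half-plane. *)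

From Stdlib Require Import Reals.
From Coquelicot Require Import Coquelicot.
Open Scope R_scope.

Definition poisson (x y t : R) : R := / PI * (y / ((t - x) ^ 2 + y ^ 2)).

(* Harmonic measure of the interval [t1,t2] (t1 <= t2) seen from z = x + i y:
   omega(z,[t1,t2]) = (1/pi) int_{t1}^{t2} y / ((t-x)^2+y^2) dt.
   The integrand is continuous, so the Riemann integral coincides with the
   Lebesgue integral over the Borel set [t1,t2]. *)
Definition omega_interval (x y t1 t2 : R) : R := RInt (poisson x y) t1 t2.

Definition cmod (x y : R) : R := sqrt (x ^ 2 + y ^ 2).

From Stdlib Require Import Reals Lra.
From Coquelicot Require Import Coquelicot.
Open Scope R_scope.

(* Let m and h be the midpoint and half-length of [t1, t2] and r = |z - m|;
   then |z|^2 - Re z (t1 + t2) + t1 t2 = r^2 - h^2.  Every t in [t1, t2] has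
   |z - t| <= r + h, so omega(z, [t1, t2]) >= 2 h Im z / (pi (r + h)^2), and
   r >= b h turns this into the first bound because
   2 b (r - h) - (b - 1) (r + h) = (b + 1) (r - b h) + (b - 1)^2 h >= 0.
   The second bound compares the denominators term by term, using
   |Re z| <= |z|. *)

Lemma cmod_sqr (x y : R) : cmod x y ^ 2 = x ^ 2 + y ^ 2.
Proof. unfold cmod; apply pow2_sqrt; nra. Qed.

Lemma Rabs_le_cmod (x y : R) : Rabs x <= cmod x y.
Proof. destruct (sqrt_plus_sqr x y) as [H _]; eapply Rle_trans; [apply Rmax_l | exact H]. Qed.

Lemma cmod_sub_le (x y s : R) : cmod (x - s) y <= cmod x y + Rabs s.
Proof.
  replace (cmod (x - s) y) with (Cmod (Cplus (x, y) (RtoC (- s)))).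
  - eapply Rle_trans; [apply Cmod_triangle |].
    rewrite Cmod_R, Rabs_Ropp; apply Rle_refl.
  - unfold Cmod, cmod; simpl; f_equal; ring.
Qed.

Lemma poisson_ge_near (x y t c d : R) : 0 < y -> Rabs (t - c) <= d ->
  / PI * (y / (cmod (x - c) y + d) ^ 2) <= poisson x y t.
Proof.
  intros Hy Htc.
  assert (Hdist : (t - x) ^ 2 + y ^ 2 = cmod (x - t) y ^ 2) by (rewrite cmod_sqr; ring).
  assert (Hpos : 0 < (t - x) ^ 2 + y ^ 2)
    by (pose proof (pow2_ge_0 (t - x)); pose proof (pow_lt y 2 Hy); lra).
  assert (Hle : cmod (x - t) y <= cmod (x - c) y + d).
  { replace (x - t) with (x - c - (t - c)) by ring.
    pose proof (cmod_sub_le (x - c) y (t - c)); lra. }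
  assert (Hcmod : 0 <= cmod (x - t) y) by apply sqrt_pos.
  unfold poisson.
  apply Rmult_le_compat_l; [apply Rlt_le, Rinv_0_lt_compat, PI_RGT_0 |].
  apply Rmult_le_compat_l; [lra |].
  apply Rinv_le_contravar; [exact Hpos |].
  rewrite Hdist; nra.
Qed.

Lemma ex_RInt_poisson (x y a b : R) : 0 < y -> ex_RInt (poisson x y) a b.
Proof.
  intros Hy.
  apply (@ex_RInt_continuous R_CompleteNormedModule); intros t _.
  apply (@ex_derive_continuous R_AbsRing R_NormedModule).
  unfold poisson; auto_derive.
  rewrite !Rmult_1_r; apply Rgt_not_eq.
  pose proof (Rle_0_sqr (t + - x)); unfold Rsqr in *; nra.
Qed.

Lemma omega_interval_ge (x y t1 t2 : R) : 0 < y -> t1 <= t2 ->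
  (t2 - t1) * (/ PI * (y / (cmod (x - (t1 + t2) / 2) y + (t2 - t1) / 2) ^ 2))
    <= omega_interval x y t1 t2.
Proof.
  intros Hy Ht.
  set (c := / PI * _).
  replace ((t2 - t1) * c) with (RInt (fun _ => c) t1 t2)
    by (rewrite RInt_const; reflexivity).
  unfold omega_interval.
  apply RInt_le; [exact Ht | apply ex_RInt_const | apply ex_RInt_poisson, Hy |].
  intros t Htt; apply poisson_ge_near; [exact Hy |].
  apply Rabs_le; lra.
Qed.

Lemma cmod_midpoint_sqr (x y t1 t2 : R) :
  cmod x y ^ 2 - x * (t1 + t2) + t1 * t2
    = cmod (x - (t1 + t2) / 2) y ^ 2 - ((t2 - t1) / 2) ^ 2.
Proof. rewrite !cmod_sqr; field. Qed.

Lemma cmod_midpoint_le (x y t1 t2 : R) :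
  cmod x y ^ 2 - x * (t1 + t2) + t1 * t2
    <= (cmod x y + Rabs t1) * (cmod x y + Rabs t2).
Proof.
  pose proof (Rabs_le_cmod x y) as Hx.
  assert (Hxt : forall t, - (x * t) <= cmod x y * Rabs t).
  { intros t. pose proof (Rabs_pos t).
    assert (Rabs (x * t) <= cmod x y * Rabs t)
      by (rewrite Rabs_mult; apply Rmult_le_compat_r; lra).
    pose proof (Rle_abs (- (x * t))); rewrite Rabs_Ropp in *; lra. }
  assert (t1 * t2 <= Rabs t1 * Rabs t2) by (rewrite <- Rabs_mult; apply Rle_abs).
  specialize (Hxt t1) as H1; specialize (Hxt t2) as H2.
  nra.
Qed.

Lemma far_ratio_le (b h r k : R) : 1 < b -> 0 < h -> b * h <= r -> 0 <= k ->
  (b - 1) / (2 * b) * (k / (r ^ 2 - h ^ 2)) <= k / (r + h) ^ 2.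
Proof.
  intros Hb Hh Hr Hk.
  assert (Hkey : (b - 1) * (r + h) <= 2 * b * (r - h)).
  { assert (0 <= (b + 1) * (r - b * h)) by (apply Rmult_le_pos; lra).
    assert (0 <= (b - 1) ^ 2 * h) by (apply Rmult_le_pos; [apply pow2_ge_0 | lra]).
    nra. }
  assert (Hrh : h < r) by nra.
  apply Rminus_le.
  replace ((b - 1) / (2 * b) * (k / (r ^ 2 - h ^ 2)) - k / (r + h) ^ 2)
    with (- k * ((2 * b * (r - h) - (b - 1) * (r + h)) / (2 * b * (r - h) * (r + h) ^ 2)))
    by (field; repeat split; apply Rgt_not_eq; nra).
  rewrite <- Ropp_mult_distr_l; apply Ropp_le_cancel; rewrite Ropp_0, Ropp_involutive.
  apply Rmult_le_pos; [exact Hk |].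
  apply Rdiv_le_0_compat; [lra |].
  apply Rmult_lt_0_compat; [nra | apply pow_lt; lra].
Qed.

Theorem proposition4 (t1 t2 b x y : R) :
  t1 < t2 -> 1 < b -> 0 < y ->
  cmod (x - (t1 + t2) / 2) y >= b * ((t2 - t1) / 2) ->
  omega_interval x y t1 t2
    >= (b - 1) / (2 * PI * b) * ((t2 - t1) * y /
         (cmod x y ^ 2 - x * (t1 + t2) + t1 * t2))
  /\
  (b - 1) / (2 * PI * b) * ((t2 - t1) * y /
         (cmod x y ^ 2 - x * (t1 + t2) + t1 * t2))
    >= (b - 1) / (2 * PI * b) * ((t2 - t1) * y /
         ((cmod x y + Rabs t1) * (cmod x y + Rabs t2))).
Proof.
  intros Ht Hb Hy Hfar.
  pose proof PI_RGT_0 as HPI.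
  rewrite (cmod_midpoint_sqr x y t1 t2).
  set (r := cmod (x - (t1 + t2) / 2) y) in *; set (h := (t2 - t1) / 2) in *.
  assert (Hh : 0 < h) by (unfold h; lra).
  assert (Hrh : h < r) by nra.
  assert (HD : 0 < r ^ 2 - h ^ 2) by nra.
  split; apply Rle_ge.
  - replace ((b - 1) / (2 * PI * b) * ((t2 - t1) * y / (r ^ 2 - h ^ 2)))
      with ((b - 1) / (2 * b) * ((t2 - t1) * (y / PI) / (r ^ 2 - h ^ 2)))
      by (field; lra).
    eapply Rle_trans; [apply far_ratio_le; try lra |].
    + apply Rmult_le_pos; [lra | apply Rdiv_le_0_compat; lra].
    + eapply Rle_trans; [| apply omega_interval_ge; lra].
      right; unfold r, h, Rdiv; ring.
  - apply Rmult_le_compat_l; [apply Rdiv_le_0_compat; nra |].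
    apply Rmult_le_compat_l; [apply Rmult_le_pos; lra |].
    apply Rinv_le_contravar; [exact HD |].
    unfold r, h; rewrite <- cmod_midpoint_sqr; apply cmod_midpoint_le.
Qed.
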